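(* In the game $\mathcal{B}_0(120,6)$, no pure strategy is weakly dominated by another pure strategy.
   Context: Fix integers $N\ge1$, $K\ge2$ and a real number $\alpha$. The Colonel Blotto game $\mathcal{B}_\alpha(N,K)$ is the two-player simultaneous-move game with players $A,B$, each with pure strategy set $S=\{s\in\{0,1,\ldots,N\}^K:\sum_{k=1}^K s_k=N\}$, in which the payoff of player $i$ at the pure profile $(s^i,s^{-i})$ is $\pi^i(s^i,s^{-i})=\sum_{k=1}^K\big(\mathbf 1[s^i_k>s^{-i}_k]+\tfrac{\alpha}{2}\mathbf 1[s^i_k=s^{-i}_k]\big)$. A pure strategy $s\in S$ is weakly dominated by a pure strategy $\hat s\in S$ if $\pi^i(s,t)\le\pi^i(\hat s,t)$ for all $t\in S$ and $\pi^i(s,t)<\pi^i(\hat s,t)$ for at least one $t\in S$. *)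

From mathcomp Require Import all_boot all_order all_algebra.
Unset Printing Implicit Defensive.
Import Order.TTheory GRing.Theory Num.Theory.
Local Open Scope ring_scope.

(* Colonel Blotto game B_alpha(N,K).  A pure strategy is an allocation
   s : 'I_K -> {0,...,N} (represented as 'I_N.+1) with total sum N. *)

Definition blotto_strategy (N K : nat) : pred {ffun 'I_K -> 'I_N.+1} :=
  fun s => (\sum_(k < K) (s k : nat))%N == N.

Definition blotto_payoff (N K : nat) (alpha : rat)
    (s t : {ffun 'I_K -> 'I_N.+1}) : rat :=
  \sum_(k < K) (((t k : nat) < s k)%N%:R + alpha / 2 * (s k == t k)%:R).

Definition weakly_dominated_by (N K : nat) (alpha : rat)
    (s shat : {ffun 'I_K -> 'I_N.+1}) : Prop :=
  (forall t, blotto_strategy N K t ->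
     blotto_payoff N K alpha s t <= blotto_payoff N K alpha shat t) /\
  (exists2 t, blotto_strategy N K t &
     blotto_payoff N K alpha s t < blotto_payoff N K alpha shat t).

(* Against the profile (shat, shat) every battlefield is tied, which is worth
   nothing when alpha = 0.  If shat weakly dominated s, then s would also win no
   battlefield against shat, i.e. s <= shat pointwise; as both allocations have
   the same total, s = shat, and a strategy cannot strictly beat itself. *)
From mathcomp Require Import all_boot all_order all_algebra.
Import Order.TTheory GRing.Theory Num.Theory.
Local Open Scope ring_scope.

Section ZeroTieValue.

Variables N K : nat.
Implicit Types s t : {ffun 'I_K -> 'I_N.+1}.

Lemma blotto_payoff0E s t :
  blotto_payoff N K 0 s t = \sum_(k < K) ((t k : nat) < s k)%N%:R.
Proof. by apply: eq_bigr => k _; rewrite !mul0r addr0. Qed.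

Lemma blotto_payoff0_self s : blotto_payoff N K 0 s s = 0.
Proof. by rewrite blotto_payoff0E big1 // => k _; rewrite ltnn. Qed.

Lemma blotto_payoff0_le0 s t :
  blotto_payoff N K 0 s t <= 0 -> forall k, (s k <= t k)%N.
Proof.
rewrite blotto_payoff0E => le_pay0 k.
have ge0 (i : 'I_K) : true -> 0 <= ((t i : nat) < s i)%N%:R :> rat by rewrite ler0n.
have /(psumr_eq0P ge0)/(_ k isT)/eqP : \sum_(i < K) ((t i : nat) < s i)%N%:R = 0 :> rat.
  by apply/eqP; rewrite eq_le le_pay0 sumr_ge0.
by rewrite pnatr_eq0 eqb0 -leqNgt.
Qed.

End ZeroTieValue.

Lemma ffun_leq_sum_eq {K m : nat} {s t : {ffun 'I_K -> 'I_m}} :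
  (forall k, s k <= t k)%N ->
  (\sum_(k < K) (s k : nat) = \sum_(k < K) (t k : nat))%N -> s = t.
Proof.
move=> le_st eq_sum; have gap0 : (\sum_(k < K) (t k - s k) = 0)%N.
  by rewrite sumnB // eq_sum subnn.
apply/ffunP => k; apply/val_inj/eqP; rewrite eqn_leq le_st /= -subn_eq0 -leqn0.
by rewrite -gap0 (bigD1 k) //= leq_addr.
Qed.

Lemma blotto0_no_weak_domination (N K : nat) (s shat : {ffun 'I_K -> 'I_N.+1}) :
  blotto_strategy N K s -> blotto_strategy N K shat ->
  ~ weakly_dominated_by N K 0 s shat.
Proof.
move=> strat_s strat_shat [le_pay [t _ lt_pay]].
have le_s_shat : forall k, (s k <= shat k)%N.
  apply: blotto_payoff0_le0; rewrite -[leRHS](blotto_payoff0_self N K shat).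
  exact: le_pay strat_shat.
have eq_sum : (\sum_(k < K) (s k : nat) = \sum_(k < K) (shat k : nat))%N.
  by rewrite (eqP strat_s) (eqP strat_shat).
by move: lt_pay; rewrite (ffun_leq_sum_eq le_s_shat eq_sum) ltxx.
Qed.

Theorem corollary3 :
  forall s shat : {ffun 'I_6 -> 'I_121},
    blotto_strategy 120 6 s -> blotto_strategy 120 6 shat ->
    ~ weakly_dominated_by 120 6 0%R s shat.
Proof. exact: blotto0_no_weak_domination. Qed.
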